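(* Let $\mathcal{A}=\langle Q,q_\epsilon,\delta,\alpha\rangle$ be a D2PW over a finite alphabet $\Sigma$, with acceptance condition given by two priority functions $\Omega_1,\Omega_2:Q\to\mathbb{N}$ whose largest values are $d_1$ and $d_2$ respectively. Then one can construct a DPW $\mathcal{A}'$ such that $L(\mathcal{A})=L(\mathcal{A}')$, the number of priorities of $\mathcal{A}'$ is $O(d_1\cdot d_2)$, and the number of states of $\mathcal{A}'$ exceeds that of $\mathcal{A}$ by a factor $\sqrt{\min(d_1^{d_2},d_2^{d_1})}$ (i.e. $|Q'|$ is $|Q|$ times this factor).
   Context: A deterministic automaton over a finite alphabet $\Sigma$ is a tuple $\langle Q,q_\epsilon,\delta,\alpha\rangle$ with finite state set $Q$, initial state $q_\epsilon$, transition function $\delta:Q\times\Sigma\to Q$ and acceptance condition $\alpha$. The run on an infinite word $w=\sigma_0\sigma_1\dots$ is the unique sequence $q_0q_1\dots$ with $q_0=q_\epsilon$ and $q_{i+1}=\delta(q_i,\sigma_i)$. For a priority function $\Omega:Q\to\mathbb{N}$, a sequence of states satisfies the parity condition $\mathsf{Parity}(\Omega)$ if $\limsup_{j\to\infty}\Omega(q_j)$ is even. A D2PW is a deterministic automaton whose acceptance condition is given by two priority functions $\Omega_1,\Omega_2$: a word is accepted if its run satisfies both $\mathsf{Parity}(\Omega_1)$ and $\mathsf{Parity}(\Omega_2)$. A DPW (deterministic parity automaton) is the case with a single priority function (a word is accepted if its run satisfies that parity condition). $L(\cdot)$ denotes the set of accepted words. The number of priorities of a DPW refers to the range of its priority function.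 *)

From mathcomp Require Import all_boot.
From Stdlib Require Import Reals.
Set Implicit Arguments. Unset Strict Implicit. Unset Printing Implicit Defensive.

Definition word (Sigma : Type) := nat -> Sigma.

Fixpoint run (Sigma Q : Type) (q0 : Q) (delta : Q -> Sigma -> Q)
    (w : word Sigma) (i : nat) : Q :=
  match i with
  | 0 => q0
  | i'.+1 => delta (run q0 delta w i') (w i')
  end.

(* limsup of the (finitely-valued) sequence Om (r j) is even:
   there is an even k occurring infinitely often and eventually bounding. *)
Definition parity_sat (Q : Type) (Om : Q -> nat) (r : nat -> Q) : Prop :=
  exists k : nat, ~~ odd k /\
    (forall N, exists j, (N <= j)%N /\ Om (r j) = k) /\
    (exists N, forall j, (N <= j)%N -> (Om (r j) <= k)%N).

Definition D2PW_accepts (Sigma Q : Type) (q0 : Q) (delta : Q -> Sigma -> Q)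
    (Om1 Om2 : Q -> nat) (w : word Sigma) : Prop :=
  parity_sat Om1 (run q0 delta w) /\ parity_sat Om2 (run q0 delta w).

Definition DPW_accepts (Sigma Q : Type) (q0 : Q) (delta : Q -> Sigma -> Q)
    (Om : Q -> nat) (w : word Sigma) : Prop :=
  parity_sat Om (run q0 delta w).

From mathcomp Require Import all_boot zify.
From Stdlib Require Import Reals Lra Classical.

(* Run A and remember, for each even level 2j <= d1 of Om1, the largest Om2
   priority seen since Om1 last reached a priority >= 2j: (d2 + 1)^(d1/2) memory
   states.  When Om1 shows p, emit p * D + 1 if p is odd and p * D + (memory of
   level p, current Om2 included) if p is even, with D even and larger than d2.
   If a is the limsup of Om1, the level-a memory is reset only on visits to a and
   in between collects every Om2 priority, so the limsup of the output is
   a * D + 1 for odd a and a * D + limsup Om2 for even a; its parity is that of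
   the D2PW condition.  Choosing Om1 to be the one with the smaller bound, the
   estimate (d2 + 1)^d1 <= 3 d2^d1 <= 6 min(d1^d2, d2^d1) for d1 <= d2 bounds the
   memory by sqrt(6 min(d1^d2, d2^d1)). *)

Set Implicit Arguments. Unset Strict Implicit. Unset Printing Implicit Defensive.

Definition is_limsup (x : nat -> nat) (L : nat) : Prop :=
  (forall N, exists j, N <= j /\ x j = L) /\ (exists N, forall j, N <= j -> x j <= L).

Lemma is_limsup_uniq x L1 L2 : is_limsup x L1 -> is_limsup x L2 -> L1 = L2.
Proof.
move=> [inf1 [N1 ub1]] [inf2 [N2 ub2]].
have [j1 [hj1 xj1]] := inf1 N2; have [j2 [hj2 xj2]] := inf2 N1.
by apply/eqP; rewrite eqn_leq -{1}xj1 ub2 //= -xj2 ub1.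
Qed.

Lemma eq_is_limsup x y L : x =1 y -> is_limsup x L -> is_limsup y L.
Proof.
move=> exy [inf [N ub]]; split=> [M|].
  by have [j [hj xj]] := inf M; exists j; rewrite -exy.
by exists N => j hj; rewrite -exy ub.
Qed.

Lemma is_limsup_exists B x : (forall t, x t <= B) -> exists L, is_limsup x L.
Proof.
move=> xB; have : exists N, forall t, N <= t -> x t <= B by exists 0.
elim: B {xB} => [|B IH] [N ub].
  exists 0; split; last by exists N.
  move=> M; exists (maxn N M); split; first exact: leq_maxr.
  by apply/eqP; rewrite -leqn0 ub ?leq_maxl.
have [inf|/not_all_ex_not [M not_inf]] :=
  classic (forall M, exists j, M <= j /\ x j = B.+1).
  by exists B.+1; split; last exists N.
apply: IH; exists (maxn N M) => t ht.
rewrite -ltnS ltn_neqAle ub ?andbT; last by lia.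
by apply/eqP => xt; apply: not_inf; exists t; split; first lia.
Qed.

Lemma parity_sat_limsup (Q : Type) (Om : Q -> nat) (r : nat -> Q) L :
  is_limsup (fun j => Om (r j)) L -> parity_sat Om r <-> ~~ odd L.
Proof.
move=> rL; split=> [[k [even_k rk]]|even_L]; last by exists L.
by rewrite (is_limsup_uniq rL rk).
Qed.

Lemma is_limsup_top_level (p o : nat -> nat) a c :
  is_limsup p a -> (forall t, p t < a -> o t < c) -> (forall t, p t = a -> o t = c) ->
  is_limsup o c.
Proof.
move=> [inf [N ub]] o_lt o_eq; split=> [M|].
  by have [j [hj pj]] := inf M; exists j; rewrite o_eq.
exists N => t /ub; rewrite leq_eqVlt => /orP [/eqP/o_eq -> //|/o_lt].
exact: ltnW.
Qed.

Section RunningMax.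

Variables (p r m : nat -> nat) (a : nat).
Hypothesis m_step : forall t, m t.+1 = if a <= p t then 0 else maxn (m t) (r t).

Lemma running_max_le b s :
  (forall t, s <= t -> r t <= b) -> a <= p s -> forall t, s < t -> m t <= b.
Proof.
move=> rb ps; elim=> [//|t IH]; rewrite ltnS leq_eqVlt => /orP [/eqP <-|st].
  by rewrite m_step ps.
by rewrite m_step; case: ifP => // _; rewrite geq_max IH // rb // ltnW.
Qed.

Lemma running_max_ge t1 t2 :
  t1 < t2 -> (forall s, t1 <= s < t2 -> p s < a) -> r t1 <= m t2.
Proof.
elim: t2 => [//|t2 IH]; rewrite ltnS leq_eqVlt => t12 below.
rewrite m_step [a <= _]leqNgt below /=; last by rewrite ltnSn andbT leq_eqVlt.
case/orP: t12 => [/eqP <-|t12]; first exact: leq_maxr.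
by rewrite leq_max IH // => s /andP [h1 h2]; rewrite below // h1 ltnW.
Qed.

Lemma is_limsup_running_max b D (o : nat -> nat) :
  is_limsup p a -> is_limsup r b ->
  (forall t, p t < a -> o t < a * D) ->
  (forall t, p t = a -> o t = a * D + maxn (m t) (r t)) ->
  is_limsup o (a * D + b).
Proof.
move=> [p_inf [Na p_ub]] [r_inf [Nb r_ub]] o_lt o_eq.
have [s [hs ps]] := p_inf (maxn Na Nb).
have m_ub : forall t, s < t -> m t <= b.
  by apply: (running_max_le (s := s)) => [t ht|]; [apply: r_ub; lia|rewrite ps].
have o_ub : forall t, s < t -> o t <= a * D + b.
  move=> t st; have : p t <= a by apply: p_ub; lia.
  rewrite leq_eqVlt => /orP [/eqP pt|pt].
  - by rewrite o_eq // leq_add2l geq_max m_ub // r_ub //; lia.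
  - by have := o_lt t pt; lia.
split; last by exists s.+1.
move=> N; have [t1 [ht1 rt1]] := r_inf (maxn N s.+1).
have p_next : exists t, (t1 <= t) && (p t == a).
  by have [t [ht pt]] := p_inf t1; exists t; rewrite ht pt eqxx.
have [t2 /andP [t12 /eqP pt2] t2_min] := ex_minnP p_next.
exists t2; split; first lia.
apply/eqP; rewrite eqn_leq o_ub ?o_eq //=; last by lia.
rewrite leq_add2l leq_max; move: t12; rewrite leq_eqVlt => /orP [/eqP <-|t12].
  by rewrite rt1 leqnn orbT.
rewrite -rt1 (running_max_ge t12) // => t' /andP [t1t' t't2].
have : p t' <= a by apply: p_ub; lia.
rewrite leq_eqVlt => /orP [/eqP pt'|//].
by have := t2_min t'; rewrite t1t' pt' eqxx leqNgt t't2 => /(_ isT).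
Qed.

End RunningMax.

Section Memory.

Variables (k d : nat).
Implicit Types (M : {ffun 'I_k -> 'I_d.+1}) (p q r : nat).

Definition mem_step M q r : {ffun 'I_k -> 'I_d.+1} :=
  [ffun i : 'I_k => if (i.+1).*2 <= q then ord0 else inord (maxn (M i) r)].

(* Entry [i] of a memory stores level [2 (i + 1)]; [slot M j] reads level [2 j],
   level 0 being reset at every step. *)
Definition slot M (j : nat) : nat :=
  if j is j'.+1 then (if insub j' is Some i then val (M i) else 0) else 0.

(* With [D] even and above every second component, [p * D + c] orders
   lexicographically and has the parity of [c]. *)
Definition mem_prio (D : nat) M p r : nat :=
  p * D + (if odd p then 1 else maxn (slot M p./2) r).

Lemma slot_le M j : slot M j <= d.
Proof. by case: j => //= j; case: insubP => // i _ _; rewrite -ltnS. Qed.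

Lemma slot_step M q r j : j <= k -> r <= d ->
  slot (mem_step M q r) j = if j.*2 <= q then 0 else maxn (slot M j) r.
Proof.
case: j => // j jk rd /=; case: insubP => [i _ <-|]; last by rewrite jk.
rewrite ffunE; case: ifP => //= _; rewrite inordK // ltnS geq_max rd andbT.
by rewrite -ltnS.
Qed.

Lemma mem_prio_lt M p r : r <= d -> mem_prio (d.+1).*2 M p r < p.+1 * (d.+1).*2.
Proof.
move=> rd; rewrite /mem_prio mulSn addnC ltn_add2r.
by case: odd; rewrite // -addnn ltn_addl // ltnS geq_max slot_le.
Qed.

End Memory.

Lemma is_limsup_mem_prio k d (p r : nat -> nat) (M : nat -> {ffun 'I_k -> 'I_d.+1}) a b :
  (forall t, (p t)./2 <= k) -> (forall t, r t <= d) ->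
  (forall t, M t.+1 = mem_step (M t) (p t) (r t)) ->
  is_limsup p a -> is_limsup r b ->
  is_limsup (fun t => mem_prio (d.+1).*2 (M t) (p t) (r t))
            (a * (d.+1).*2 + (if odd a then 1 else b)).
Proof.
move=> p_le r_le M_step pa rb; set D := (d.+1).*2.
have o_lt t : p t < a -> mem_prio D (M t) (p t) (r t) < a * D.
  move=> pt; apply: leq_trans (mem_prio_lt (M t) (p t) (r_le t)) _.
  by rewrite leq_mul2r pt orbT.
have o_eq t : p t = a -> mem_prio D (M t) (p t) (r t) =
    a * D + (if odd a then 1 else maxn (slot (M t) a./2) (r t)) by move=> ->.
case: ifP o_eq => odd_a o_eq.
  by apply: is_limsup_top_level pa _ o_eq => t /o_lt; rewrite addn1; apply: ltnW.
have a_le : a./2 <= k by case: pa => /(_ 0) [j [_ <-]] _.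
apply: (is_limsup_running_max (m := fun t => slot (M t) a./2)) pa rb o_lt o_eq.
by move=> t; rewrite M_step slot_step ?r_le // even_halfK ?odd_a.
Qed.

Lemma Nat_pow_expn m n : Nat.pow m n = expn m n.
Proof. by elim: n => //= n ->; rewrite expnS. Qed.

Lemma exp_pow (x : R) (n : nat) : (exp x ^ n = exp (INR n * x))%R.
Proof.
elim: n => [|n IH]; first by rewrite Rmult_0_l exp_0.
by rewrite S_INR [(exp x ^ _)%R]/= IH -exp_plus; congr exp; lra.
Qed.

Lemma INR_succ_pow_le (b j : nat) :
  0 < b -> j <= b -> (INR b.+1 ^ j <= 3 * INR b ^ j)%R.
Proof.
move=> /ltP/lt_0_INR b_gt0 /leP jb.
have inv_gt0 : (0 < / INR b)%R by apply: Rinv_0_lt_compat.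
have small_le : ((1 + / INR b) ^ j <= 3)%R.
  apply: Rle_trans (_ : (1 + / INR b) ^ b <= _)%R; first by apply: Rle_pow jb; lra.
  apply: Rle_trans exp_le_3.
  have -> : exp 1 = (exp (/ INR b) ^ b)%R by rewrite exp_pow Rinv_r //; lra.
  apply: pow_incr; split; [lra | exact: exp_ineq1_le].
have -> : INR b.+1 = (INR b * (1 + / INR b))%R by rewrite S_INR; field; lra.
rewrite Rpow_mult_distr Rmult_comm; apply: Rmult_le_compat_r => //.
by apply: pow_le; lra.
Qed.

Section PowerBounds.

(* [Reals] makes [^] on [nat] denote [Nat.pow]. *)
Local Notation "m ^ n" := (expn m n) : nat_scope.

Lemma succ_pow_le (b j : nat) : 0 < b -> j <= b -> b.+1 ^ j <= 3 * b ^ j.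
Proof.
move=> b_gt0 jb; apply/leP/INR_le; rewrite mult_INR -!Nat_pow_expn !pow_INR.
have := INR_succ_pow_le b_gt0 jb; rewrite [INR 3]/=; lra.
Qed.

Lemma pow_le_pow_swap (a b : nat) : 3 <= a -> a <= b -> b ^ a <= a ^ b.
Proof.
move=> a_ge3; elim: b => [|b IH]; first by rewrite leqn0 => /eqP ->.
rewrite leq_eqVlt => /orP [/eqP <- // | ]; rewrite ltnS => ab.
rewrite expnS; apply: leq_trans (succ_pow_le _ ab) _; first lia.
by rewrite leq_mul // IH.
Qed.

Lemma succ_sqr_le_pow2 (b : nat) : b.+1 ^ 2 <= 6 * 2 ^ b.
Proof.
elim: b => // b IH; case: (leqP b 1) => [|b_ge2]; first by case: b {IH} => [|[]].
apply: leq_trans (_ : 2 * b.+1 ^ 2 <= _); first by rewrite !expnS !expn0 !muln1; nia.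
by rewrite [2 ^ _]expnS mulnCA leq_mul2l IH.
Qed.

Lemma sqr_pow_half_le (a b : nat) :
  0 < a -> a <= b -> (b.+1 ^ a./2) ^ 2 <= 6 * minn (a ^ b) (b ^ a).
Proof.
move=> a_gt0 ab; rewrite -expnM muln2 minnMr leq_min.
have le_3pow : b.+1 ^ a./2.*2 <= 3 * b ^ a.
  have half_le : a./2.*2 <= a by rewrite halfK leq_subr.
  apply: leq_trans (succ_pow_le _ (leq_trans half_le ab)) _; first lia.
  by rewrite leq_mul2l leq_pexp2l //; lia.
apply/andP; split; last by apply: leq_trans le_3pow _; rewrite leq_mul2r orbT.
case: (leqP 3 a) => [a_ge3|].
  by apply: leq_trans le_3pow _; rewrite leq_mul // pow_le_pow_swap.
case: a a_gt0 ab {le_3pow} => [|[|[|]]] // _ ab _.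
  by rewrite exp1n.
exact: succ_sqr_le_pow2.
Qed.

End PowerBounds.

Lemma INR_mul_le_sqrt (n X C m : nat) :
  X * X <= C * C * m -> (INR (n * X) <= INR C * INR n * sqrt (INR m))%R.
Proof.
move=> /leP/le_INR; rewrite !mult_INR -[in X in (_ <= X)%R](sqrt_sqrt _ (pos_INR m)).
move: (sqrt (INR m)) (sqrt_pos (INR m)) => s s_ge0 sqr_le.
have X_le : (INR X <= INR C * s)%R.
  apply: Rsqr_incr_0_var; last exact: Rmult_le_pos (pos_INR C) s_ge0.
  by rewrite /Rsqr; lra.
by have := pos_INR n; nra.
Qed.

Section Product.

Variables (Sigma Q : finType) (q0 : Q) (delta : Q -> Sigma -> Q) (Om1 Om2 : Q -> nat).
Variables (d1 d2 : nat).

Definition prod_state : finType := (Q * {ffun 'I_d1./2 -> 'I_d2.+1})%type.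

Definition prod_init : prod_state := (q0, [ffun=> ord0]).

Definition prod_delta (s : prod_state) (x : Sigma) : prod_state :=
  (delta s.1 x, mem_step s.2 (Om1 s.1) (Om2 s.1)).

Definition prod_prio (s : prod_state) : nat := mem_prio (d2.+1).*2 s.2 (Om1 s.1) (Om2 s.1).

Lemma run_prod_fst w t : (run prod_init prod_delta w t).1 = run q0 delta w t.
Proof. by elim: t => //= t ->. Qed.

Hypotheses (Om1_le : forall q, Om1 q <= d1) (Om2_le : forall q, Om2 q <= d2).

Lemma prod_prio_lt s : 0 < d1 -> 0 < d2 -> prod_prio s < 8 * (d1 * d2).
Proof.
move=> d1_gt0 d2_gt0; apply: leq_trans (mem_prio_lt _ _ (Om2_le s.1)) _.
by have := Om1_le s.1; nia.
Qed.

Lemma prod_accepts w :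
  D2PW_accepts q0 delta Om1 Om2 w <-> DPW_accepts prod_init prod_delta prod_prio w.
Proof.
set p := fun t => Om1 (run q0 delta w t); set r := fun t => Om2 (run q0 delta w t).
have [a pa] := is_limsup_exists (x := p) (fun t => Om1_le _).
have [b rb] := is_limsup_exists (x := r) (fun t => Om2_le _).
have o_lim : is_limsup (fun t => prod_prio (run prod_init prod_delta w t))
    (a * (d2.+1).*2 + (if odd a then 1 else b)).
  apply: eq_is_limsup (is_limsup_mem_prio
    (M := fun t => (run prod_init prod_delta w t).2) _ _ _ pa rb) => t.
  - by rewrite /prod_prio /p /r run_prod_fst.
  - exact/half_leq/Om1_le.
  - exact: Om2_le.
  - by rewrite /= run_prod_fst.
rewrite /D2PW_accepts /DPW_accepts (parity_sat_limsup pa) (parity_sat_limsup rb).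
rewrite (parity_sat_limsup o_lim) oddD oddM odd_double andbF /=.
by case: (odd a); split=> // -[].
Qed.

Lemma D2PW_to_DPW : 0 < d1 -> d1 <= d2 ->
  exists (Q' : finType) (q0' : Q') (delta' : Q' -> Sigma -> Q') (Om : Q' -> nat),
    (forall w, D2PW_accepts q0 delta Om1 Om2 w <-> DPW_accepts q0' delta' Om w) /\
    (forall q, Om q < 8 * (d1 * d2)) /\
    (INR #|Q'| <= INR 8 * INR #|Q| * sqrt (INR (minn (d1 ^ d2) (d2 ^ d1))))%R.
Proof.
move=> d1_gt0 d12; exists prod_state, prod_init, prod_delta, prod_prio.
split; first exact: prod_accepts.
split=> [s|]; first exact: prod_prio_lt d1_gt0 (leq_trans d1_gt0 d12).
rewrite card_prod card_ffun !card_ord !Nat_pow_expn; apply: INR_mul_le_sqrt.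
by rewrite mulnn; apply: leq_trans (sqr_pow_half_le d1_gt0 d12) _; apply: leq_mul.
Qed.

End Product.

Theorem theorem2 :
  exists C : nat,
  forall (Sigma Q : finType) (q0 : Q) (delta : Q -> Sigma -> Q) (Om1 Om2 : Q -> nat),
  let d1 := (\max_(q : Q) Om1 q)%N in
  let d2 := (\max_(q : Q) Om2 q)%N in
  (1 <= d1)%N -> (1 <= d2)%N ->
  exists (Q' : finType) (q0' : Q') (delta' : Q' -> Sigma -> Q') (Om : Q' -> nat),
    (forall w : word Sigma, D2PW_accepts q0 delta Om1 Om2 w <-> DPW_accepts q0' delta' Om w) /\
    (forall q : Q', (Om q < C * (d1 * d2))%N) /\
    (INR #|Q'| <= INR C * INR #|Q| * sqrt (INR (minn (d1 ^ d2) (d2 ^ d1))))%R.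
Proof.
exists 8 => Sigma Q q0 delta Om1 Om2 d1 d2 d1_gt0 d2_gt0.
have Om1_le q : Om1 q <= d1 by apply: leq_bigmax.
have Om2_le q : Om2 q <= d2 by apply: leq_bigmax.
have [d12|/ltnW d21] := leqP d1 d2; first exact: D2PW_to_DPW.
have [Q' [q0' [delta' [Om [accepts [prio_lt card_le]]]]]] :=
  D2PW_to_DPW q0 delta Om2_le Om1_le d2_gt0 d21.
exists Q', q0', delta', Om; rewrite [d1 * d2]mulnC minnC; split=> // w.
by rewrite -accepts /D2PW_accepts; tauto.
Qed.
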